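(* Let $I$ be a connected and locally connected topological space and $h:I\to\mathbb{R}$ a positive continuous function attaining its lower bound at $v\in I$. Let $x\in I$ and $\lambda\in[h(v),h(x)]$. Then there is $y\in C_{x,\lambda}$ with $h(y)=\lambda$.
   Context: For $x\in I$ and $\lambda\le h(x)$, $C_{x,\lambda}$ denotes the maximal connected subset of $\{y\in I: h(y)\ge\lambda\}$ containing $x$. *)

From HB Require Import structures.
From mathcomp Require Import all_boot all_order all_algebra.
From mathcomp Require Import all_classical all_reals all_analysis.
Set Implicit Arguments. Unset Strict Implicit. Unset Printing Implicit Defensive.
Import Order.TTheory GRing.Theory Num.Theory.
Local Open Scope classical_set_scope.
Local Open Scope ring_scope.

Definition locally_connected (T : topologicalType) :=
  forall (x : T) (U : set T), nbhs x U ->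
    exists V : set T, [/\ open V, V x, connected V & V `<=` U].

Definition superlevel_component (T : topologicalType) (R : realType)
  (h : T -> R) (x : T) (lam : R) : set T :=
  connected_component [set y | lam <= h y] x.

From HB Require Import structures.
From mathcomp Require Import all_boot all_order all_algebra.
From mathcomp Require Import all_classical all_reals all_analysis.
Import Order.TTheory GRing.Theory Num.Theory numFieldNormedType.Exports.
Local Open Scope classical_set_scope.
Local Open Scope ring_scope.

(* If C_{x,lam} contained no point of the level set {h = lam}, it would lie in
   the open set {h > lam}; local connectedness then makes C_{x,lam} open, and
   as a component of the closed set {h >= lam} it is also closed.  In the
   connected space I it would be everything, in particular it would contain
   the minimum point v, although h v <= lam. *)

Lemma connected_component_open (T : topologicalType) (A U : set T) (x : T) :
  locally_connected T -> open U -> U `<=` A ->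
  connected_component A x `<=` U -> open (connected_component A x).
Proof.
move=> lcT oU UA CU; rewrite openE => z Cz.
have [V [oV Vz cV VU]] := lcT z U (open_nbhs_nbhs (conj oU (CU z Cz))).
apply: filterS (open_nbhs_nbhs (conj oV Vz)).
rewrite (same_connected_component Cz).
exact: connected_component_max Vz (subset_trans VU UA) cV.
Qed.

Section superlevel_component.
Variables (R : realType) (T : topologicalType) (h : T -> R) (x : T) (lam : R).
Hypothesis h_cont : continuous h.

Let C := superlevel_component h x lam.

Lemma superlevel_component_closed : closed C.
Proof.
apply: component_closed.
apply: (@preimage_closed _ _ h [set r | lam <= r]); last exact: closed_ge.
by move=> y _; exact: h_cont.
Qed.

Lemma superlevel_component_open : locally_connected T ->
  (forall z, C z -> lam < h z) -> open C.
Proof.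
move=> lcT Cgt.
apply: (@connected_component_open _ _ (h @^-1` [set r | lam < r])) => //.
- apply: (@open_comp _ _ h [set r | lam < r]); last exact: open_gt.
  by move=> y _; exact: h_cont.
- by move=> y /ltW.
Qed.

Lemma superlevel_component_setT : connected [set: T] -> locally_connected T ->
  lam <= h x -> (forall z, C z -> lam < h z) -> C = [set: T].
Proof.
move=> cT lcT lamx Cgt; apply: cT.
- by exists x; exact: connected_component_refl.
- by exists C; [exact: superlevel_component_open | rewrite setTI].
- by exists C; [exact: superlevel_component_closed | rewrite setTI].
Qed.

End superlevel_component.

Theorem mainTheorem5 (R : realType) (I : topologicalType) (h : I -> R) (v x : I) (lam : R) :
  connected (@setT I) -> locally_connected I ->
  continuous h -> (forall y, 0 < h y) -> (forall y, h v <= h y) ->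
  h v <= lam <= h x ->
  exists y, superlevel_component h x lam y /\ h y = lam.
Proof.
move=> cI lcI hc _ hmin /andP[vlam lamx].
apply: contrapT => no_level.
have Cgt z : superlevel_component h x lam z -> lam < h z.
  move=> Cz; rewrite lt_neqAle (connected_component_sub Cz) andbT.
  by apply/eqP => lamz; apply: no_level; exists z.
have CT := @superlevel_component_setT R I h x lam hc cI lcI lamx Cgt.
have : lam < h v by apply: Cgt; rewrite CT.
by rewrite ltNge vlam.
Qed.
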